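(* Let $F,G\in 1+x\,\mathbb Z[[x]]$ be formal power series whose coefficients are congruent modulo $4$ (coefficient by coefficient). If there exists $H\in 1+x\,\mathbb Z[[x]]$ with $H^2=F$, then there exists $H'\in 1+x\,\mathbb Z[[x]]$ with $H'^2=G$. *)

From mathcomp Require Import all_boot all_order all_algebra.
Set Implicit Arguments. Unset Strict Implicit. Unset Printing Implicit Defensive.
Import Order.TTheory GRing.Theory Num.Theory.
Local Open Scope ring_scope.

Definition fps := nat -> int.

Definition fps_mul (f g : fps) : fps :=
  fun n => \sum_(i < n.+1) f i * g (n - i)%N.

Definition in_one_plus_xZ (f : fps) : Prop := f 0%N = 1.

(* The square root H' = 1 + h_1 x + h_2 x^2 + ... of G is forced coefficient by
   coefficient: comparing coefficients of x^m in H'^2 = G gives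
   2 h_m = G_m - sum_{0<i<m} h_i h_{m-i}.  By strong induction h_i = H_i (mod 2)
   for all i: if this holds below m, the cross sums of H' and H agree mod 4
   (each pair h_i h_{m-i}, h_{m-i} h_i contributes twice, and the product of
   two even differences is 0 mod 4), so the right-hand side is congruent to
   F_m - sum_{0<i<m} H_i H_{m-i} = 2 H_m mod 4.  Hence it is even and its half
   is H_m mod 2. *)
From mathcomp Require Import all_boot all_order all_algebra.
From mathcomp Require Import zify ring.
From Stdlib Require Import FunctionalExtensionality.
Import Order.TTheory GRing.Theory Num.Theory.
Local Open Scope ring_scope.

Lemma big_nat_mirror (V : nmodType) (m : nat) (F : nat -> nat -> V) :
  \sum_(1 <= i < m) F i (m - i)%N = \sum_(1 <= i < m) F (m - i)%N i.
Proof.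
rewrite big_nat_rev; apply: eq_big_nat => i /andP [i_gt0 i_lt].
have -> : (1 + m - i.+1 = m - i)%N by lia.
by have -> : (m - (m - i) = i)%N by lia.
Qed.

Lemma modz_half (d e x y : int) : d != 0 ->
  (x = y * d %[mod d * e])%Z ->
  x = (x %/ d)%Z * d /\ ((x %/ d)%Z = y %[mod e])%Z.
Proof.
move=> d_neq0 /eqP; rewrite eqz_mod_dvd => /dvdzP [t x_eq].
have -> : x = (y + t * e) * d by rewrite -[x](subrK (y * d)) x_eq; ring.
by rewrite mulzK // addrC modzMDl.
Qed.

Definition fps_sqr_mid (h : fps) (m : nat) : int :=
  \sum_(1 <= i < m) h i * h (m - i)%N.

Lemma fps_mul_sqr_split (h : fps) (m : nat) : (0 < m)%N ->
  fps_mul h h m = 2 * h 0%N * h m + fps_sqr_mid h m.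
Proof.
case: m => // n _.
rewrite /fps_mul big_ord_recl big_ord_recr /= subn0 subnn /fps_sqr_mid.
rewrite big_add1 /= big_mkord.
under eq_bigr do rewrite /bump add1n.
ring.
Qed.

Lemma fps_sqr_mid_mod4 (h h' : fps) (m : nat) :
  (forall i, (0 < i < m)%N -> (h' i = h i %[mod 2])%Z) ->
  (fps_sqr_mid h' m = fps_sqr_mid h m %[mod 4])%Z.
Proof.
move=> hh'; apply/eqP; rewrite eqz_mod_dvd.
pose d i := h' i - h i.
have d_even i : (0 < i < m)%N -> (2 %| d i)%Z.
  by move=> i_in; rewrite -eqz_mod_dvd; apply/eqP; exact: hh'.
have -> : fps_sqr_mid h' m - fps_sqr_mid h m =
    \sum_(1 <= i < m) (d i * h (m - i)%N + h i * d (m - i)%N + d i * d (m - i)%N).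
  by rewrite -sumrB; apply: eq_big_nat => i _; rewrite /d; ring.
rewrite !big_split /= (big_nat_mirror _ m (fun i j => h i * d j)) -!big_split /=.
rewrite big_seq; apply: rpred_sum => i; rewrite mem_index_iota => i_in.
have [d_i_even d_mi_even] : (2 %| d i)%Z /\ (2 %| d (m - i)%N)%Z.
  by split; apply: d_even; lia.
rewrite (_ : _ + _ = 2 * (d i * h (m - i)%N) + d i * d (m - i)%N); last by ring.
by apply: rpredD; apply: (@dvdz_mul 2 2) => //; apply: dvdz_mulr.
Qed.

(* [%/ 2] is floor division; under the hypotheses of the theorem it is exact. *)
Definition fps_sqrt_step (G : fps) (s : seq int) : int :=
  ((G (size s) - fps_sqr_mid (nth 0 s) (size s)) %/ 2)%Z.

Fixpoint fps_sqrt_prefix (G : fps) (n : nat) : seq int :=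
  if n is n'.+1 then
    rcons (fps_sqrt_prefix G n') (fps_sqrt_step G (fps_sqrt_prefix G n'))
  else [:: 1].

Definition fps_sqrt (G : fps) : fps := fun n => (fps_sqrt_prefix G n)`_n.

Lemma size_fps_sqrt_prefix G n : size (fps_sqrt_prefix G n) = n.+1.
Proof. by elim: n => //= n IHn; rewrite size_rcons IHn. Qed.

Lemma nth_fps_sqrt_prefix G n k :
  (k <= n)%N -> (fps_sqrt_prefix G n)`_k = fps_sqrt G k.
Proof.
elim: n => [|n IHn]; first by rewrite leqn0 => /eqP ->.
rewrite leq_eqVlt => /orP [/eqP -> //| k_lt].
by rewrite /= nth_rcons size_fps_sqrt_prefix k_lt IHn.
Qed.

Lemma fps_sqrt0 G : fps_sqrt G 0%N = 1.
Proof. by []. Qed.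

Lemma fps_sqrtE G m : (0 < m)%N ->
  fps_sqrt G m = ((G m - fps_sqr_mid (fps_sqrt G) m) %/ 2)%Z.
Proof.
case: m => // n _.
rewrite /fps_sqrt /= nth_rcons size_fps_sqrt_prefix ltnn eqxx /fps_sqrt_step.
rewrite size_fps_sqrt_prefix; congr ((G _ - _) %/ 2)%Z.
by apply: eq_big_nat => i i_in; rewrite !nth_fps_sqrt_prefix //; lia.
Qed.

Section SquareRootMod4.

Context {F G H : fps}.
Hypothesis H0 : in_one_plus_xZ H.
Hypothesis HH : fps_mul H H = F.
Hypothesis FG : forall n, (F n = G n %[mod 4])%Z.

Lemma fps_sqrt_step_mod2 m : (0 < m)%N ->
    (forall i, (0 < i < m)%N -> (fps_sqrt G i = H i %[mod 2])%Z) ->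
  G m - fps_sqr_mid (fps_sqrt G) m = fps_sqrt G m * 2 /\
  (fps_sqrt G m = H m %[mod 2])%Z.
Proof.
move=> m_gt0 IHm; rewrite fps_sqrtE //; apply: modz_half => //.
have F_m : F m = H m * 2 + fps_sqr_mid H m.
  by rewrite -HH fps_mul_sqr_split // H0; ring.
have mid_mod4 : (fps_sqr_mid (fps_sqrt G) m = fps_sqr_mid H m %[mod 4])%Z.
  exact: fps_sqr_mid_mod4.
apply/eqP; rewrite eqz_mod_dvd.
have -> : G m - fps_sqr_mid (fps_sqrt G) m - H m * 2 =
    (G m - F m) - (fps_sqr_mid (fps_sqrt G) m - fps_sqr_mid H m).
  by rewrite F_m; ring.
by apply: rpredB; rewrite -eqz_mod_dvd; apply/eqP.
Qed.

Hypothesis G0 : in_one_plus_xZ G.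

Lemma fps_sqrt_mod2 m : (fps_sqrt G m = H m %[mod 2])%Z.
Proof.
elim/ltn_ind: m => m IHm; case: (posnP m) => [->|m_gt0]; first by rewrite H0.
by case: (fps_sqrt_step_mod2 _ m_gt0) => // i /andP [_ /IHm].
Qed.

Lemma sqr_fps_sqrt : fps_mul (fps_sqrt G) (fps_sqrt G) = G.
Proof.
apply: functional_extensionality => m; case: (posnP m) => [->|m_gt0].
  by rewrite /fps_mul big_ord1 G0.
have [sqrt_m _] := fps_sqrt_step_mod2 _ m_gt0 (fun i _ => fps_sqrt_mod2 i).
rewrite fps_mul_sqr_split // fps_sqrt0 -[G m](subrK (fps_sqr_mid (fps_sqrt G) m)).
by rewrite sqrt_m; ring.
Qed.

End SquareRootMod4.

Theorem proposition4p2 (F G : fps) :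
  in_one_plus_xZ F -> in_one_plus_xZ G ->
  (forall n : nat, (F n = G n %[mod 4])%Z) ->
  (exists H : fps, in_one_plus_xZ H /\ fps_mul H H = F) ->
  exists H' : fps, in_one_plus_xZ H' /\ fps_mul H' H' = G.
Proof.
move=> _ G0 FG [H [H0 HH]]; exists (fps_sqrt G); split; first exact: fps_sqrt0.
exact: sqr_fps_sqrt H0 HH FG G0.
Qed.
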